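(* Let $p\ge 2$, let $E$ be a Banach space and $f=\sum_{i\in I}d_i$ a finite sum in $E$. Let $(\varepsilon_i)_{i\in I}$ be independent random variables with $P(\varepsilon_i=\pm1)=1/2$, $S=\big(\mathbb E\|\sum_{i\in I}\varepsilon_id_i\|^p\big)^{1/p}$, and $f^{\otimes p}=f\otimes\cdots\otimes f$ ($p$ times). Then $$\Big\|f^{\otimes p}-\sum_{g\colon\{1,\dots,p\}\to I\ \text{injective}}d_{g(1)}\otimes\cdots\otimes d_{g(p)}\Big\|_\wedge\le\sum_{0\le s\le p-2}\binom{p}{s}(p-s)!\,\|f\|^s S^{p-s}.$$
   Context: $\|\cdot\|_\wedge$ is the projective tensor norm on the $p$-fold projective tensor product $E\widehat\otimes\cdots\widehat\otimes E$. *)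

From mathcomp Require Import all_boot all_order all_algebra.
From mathcomp Require Import all_classical all_reals all_analysis.
Set Implicit Arguments. Unset Strict Implicit. Unset Printing Implicit Defensive.
Import Order.TTheory GRing.Theory Num.Theory.
Import numFieldNormedType.Exports.
Local Open Scope ring_scope.
Local Open Scope classical_set_scope.

(* Elements of the algebraic p-fold tensor product E (x) ... (x) E are
   represented by finite formal sums  sum_k c_k * x_k(0) (x) ... (x) x_k(p-1).
   Two formal sums denote the same tensor iff they agree on every
   p-multilinear form E^p -> R (universal property of the tensor product). *)
Section Tensor.
Context {R : realType} {E : normedModType R} {p : nat}.

Definition tupd (x : 'I_p -> E) (i : 'I_p) (v : E) : 'I_p -> E :=
  fun j => if j == i then v else x j.

Definition multilinear (L : ('I_p -> E) -> R) : Prop :=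
  forall (x : 'I_p -> E) (i : 'I_p) (a : R) (u v : E),
    L (tupd x i (a *: u + v)) = a * L (tupd x i u) + L (tupd x i v).

Definition tensor := seq (R * ('I_p -> E)).

Definition teval (L : ('I_p -> E) -> R) (t : tensor) : R :=
  \sum_(c <- t) c.1 * L c.2.

Definition tequiv (t1 t2 : tensor) : Prop :=
  forall L, multilinear L -> teval L t1 = teval L t2.

Definition tpure (x : 'I_p -> E) : tensor := [:: (1, x)].

Definition tsub (t1 t2 : tensor) : tensor :=
  t1 ++ [seq (- c.1, c.2) | c <- t2].

Definition tcost (t : tensor) : R :=
  \sum_(c <- t) `|c.1| * \prod_(j < p) `|c.2 j|.

Definition projnorm (t : tensor) : R :=
  inf [set tcost v | v in [set v | tequiv t v]].

End Tensor.

(* E || sum_i eps_i d_i ||^p for independent Rademacher signs (eps_i):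
   the joint law is uniform on {-1,1}^I, so the expectation is the average. *)
Definition rademacher_moment {R : realType} {E : normedModType R}
  {I : finType} (d : I -> E) (p : nat) : R :=
  (2 ^+ #|I|)^-1 *
  \sum_(eps : {ffun I -> bool})
     `| \sum_(i : I) ((if eps i then 1 else -1) : R) *: d i | ^+ p.

From mathcomp Require Import all_boot all_order all_algebra all_fingroup.
From mathcomp Require Import all_classical all_reals all_analysis.
From mathcomp Require Import ring lra zify.
Import Order.TTheory GRing.Theory Num.Theory.
Import numFieldNormedType.Exports.
Local Open Scope ring_scope.

(* Expanding f^(x)p = sum_g d_g over all g : {1..p} -> I, the identity
   sum_s sgn(s) [g o s = g] = [g injective] over permutations s of {1..p}
   writes the defect f^(x)p - sum_{g injective} d_g as
   - sum_{s <> 1} sgn(s) sum_{g o s = g} d_g.  For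
   independent sign vectors e_1, ..., e_p in {-1,1}^I one has
   E[prod_k e_k(g k) e_{s k}(g k)] = [g o s = g], so the defect is the average
   over e of - sum_{s <> 1} sgn(s) x_{s,e,1} (x) ... (x) x_{s,e,p}, where
   x_{s,e,k} = sum_i e_k(i) e_{s k}(i) d_i.  If s fixes k then x_{s,e,k} = f;
   otherwise x_{s,e,k} is again a Rademacher sum, with p-th moment S^p, and
   AM-GM bounds the mean of the product by ||f||^j S^(p-j), j = #fix(s).
   At most C(p,j) (p-j)! permutations have j fixed points, and j <= p-2 when
   s <> 1. *)

Set Implicit Arguments. Unset Strict Implicit. Unset Printing Implicit Defensive.

Lemma sum_eq0_involution (R : numDomainType) (T : finType) (h : T -> T) (F : T -> R) :
  involutive h -> (forall x, F (h x) = - F x) -> \sum_x F x = 0.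
Proof.
move=> hK Fh; apply/eqP; rewrite -eqNr; apply/eqP.
by rewrite {2}(reindex_inj (inv_inj hK)) -sumrN; apply: eq_bigr => x _; rewrite Fh.
Qed.

Section FfunUpdate.
Variables (aT rT : finType).

Definition ffun_upd (g : {ffun aT -> rT}) (k : aT) (i : rT) : {ffun aT -> rT} :=
  [ffun j => if j == k then i else g j].

Lemma ffun_updE g k i j : ffun_upd g k i j = if j == k then i else g j.
Proof. exact: ffunE. Qed.

Lemma ffun_upd_upd g k i j : ffun_upd (ffun_upd g k i) k j = ffun_upd g k j.
Proof. by apply/ffunP => l; rewrite !ffunE; case: eqP. Qed.

Lemma ffun_upd_id g k : ffun_upd g k (g k) = g.
Proof. by apply/ffunP => l; rewrite !ffunE; case: eqP => // ->. Qed.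

Lemma sum_ffun_upd (R : nmodType) k i0 i (H : {ffun aT -> rT} -> R) :
  \sum_(g : {ffun aT -> rT} | g k == i0) H (ffun_upd g k i) =
  \sum_(g : {ffun aT -> rT} | g k == i) H g.
Proof.
pose tau g := ffun_upd g k (tperm i0 i (g k)).
have tauK : involutive tau.
  by move=> g; rewrite /tau ffun_upd_upd ffunE eqxx tpermK ffun_upd_id.
rewrite [RHS](reindex_inj (inv_inj tauK)); apply: eq_big => g.
  by rewrite /tau ffunE eqxx (canF_eq (tpermK i0 i)) tpermR.
by move=> /eqP gk; rewrite /tau gk tpermL.
Qed.

End FfunUpdate.

Section Multilinear.
Context {R : realType} {E : normedModType R} {p : nat}.
Variable L : ('I_p -> E) -> R.
Hypothesis L_multilinear : multilinear L.

Lemma multilinear_tupd0 x k : L (tupd x k 0) = 0.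
Proof.
have := L_multilinear x k 1 0 0; rewrite scaler0 addr0 mul1r => L2.
by apply: (@addrI _ (L (tupd x k 0))); rewrite addr0 -L2.
Qed.

Lemma multilinear_tupd_sum x k (J : Type) (r : seq J) (c : J -> R) (u : J -> E) :
  L (tupd x k (\sum_(j <- r) c j *: u j)) = \sum_(j <- r) c j * L (tupd x k (u j)).
Proof.
elim: r => [|j r IHr]; first by rewrite !big_nil multilinear_tupd0.
by rewrite !big_cons L_multilinear IHr.
Qed.

Variables (I : finType) (d : I -> E) (a : 'I_p -> I -> R).

(* The weight [g k == i0] on the coordinates k >= n not yet expanded makes
   the sum over their values trivial. *)
Lemma multilinear_expand_prefix (i0 : I) n : (n <= p)%N -> forall y : 'I_p -> E,
  L (fun k : 'I_p => if (k < n)%N then \sum_i a k i *: d i else y k) =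
  \sum_(g : {ffun 'I_p -> I})
    (\prod_(k : 'I_p) (if (k < n)%N then a k (g k) else (g k == i0)%:R)) *
    L (fun k : 'I_p => if (k < n)%N then d (g k) else y k).
Proof.
pose w n (g : {ffun 'I_p -> I}) :=
  \prod_(k : 'I_p) (if (k < n)%N then a k (g k) else (g k == i0)%:R).
elim: n => [_ y | n IHn lt_np y].
  transitivity (L y); first by congr L; apply: funext => k; rewrite ltn0.
  rewrite (eq_bigr (fun g : {ffun 'I_p -> I} =>
                      (\prod_(k : 'I_p) (g k == i0)%:R) * L y)); last first.
    by move=> g _; congr (_ * L _).
  rewrite -big_distrl -(bigA_distr_bigA (fun _ i => (i == i0)%:R)) /=.
  rewrite big1 ?mul1r // => k _.
  by rewrite (bigD1 i0) //= eqxx big1 ?addr0 // => i /negbTE ->.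
pose kn := Ordinal lt_np.
have ltnSE (k : 'I_p) : (k < n.+1)%N = (k == kn) || (k < n)%N.
  by rewrite ltnS leq_eqVlt.
have w_step g : w n.+1 g = a kn (g kn) * w n (ffun_upd g kn i0).
  rewrite /w (bigD1 kn) //= [in RHS](bigD1 kn) //= ltnSn ltnn ffunE !eqxx mul1r.
  by congr (_ * _); apply: eq_bigr => k /negbTE nk; rewrite ltnSE nk ffunE nk.
pose x (k : 'I_p) := if (k < n)%N then \sum_i a k i *: d i else y k.
have -> : (fun k : 'I_p => if (k < n.+1)%N then \sum_i a k i *: d i else y k) =
          tupd x kn (\sum_i a kn i *: d i).
  by apply: funext => k; rewrite /tupd /x ltnSE; case: eqP => [->|].
rewrite multilinear_tupd_sum.
pose Phi (g : {ffun 'I_p -> I}) :=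
  L (fun k : 'I_p => if (k < n.+1)%N then d (g k) else y k).
transitivity (\sum_i a kn i *
                \sum_(g : {ffun 'I_p -> I} | g kn == i0) w n g * Phi (ffun_upd g kn i)).
  apply: eq_bigr => i _; congr (_ * _).
  have -> : tupd x kn (d i) =
            fun k : 'I_p =>
              if (k < n)%N then \sum_j a k j *: d j else tupd y kn (d i) k.
    by apply: funext => k; rewrite /tupd /x; case: eqP => [->|]; rewrite ?ltnn.
  rewrite IHn ?(ltnW lt_np) // [RHS]big_mkcond; apply: eq_bigr => g _.
  have -> : (fun k : 'I_p => if (k < n)%N then d (g k) else tupd y kn (d i) k) =
            fun k : 'I_p => if (k < n.+1)%N then d (ffun_upd g kn i k) else y k.
    by apply: funext => k; rewrite ltnSE /tupd ffunE; case: eqP => [->|_] /=;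
      rewrite ?ltnn.
  case: eqP => // /eqP /negbTE gkn.
  by rewrite /w (bigD1 kn) //= ltnn gkn !mul0r.
rewrite [RHS](partition_big (fun g : {ffun 'I_p -> I} => g kn) predT) //=.
apply: eq_bigr => i _; rewrite big_distrr /=.
rewrite -(sum_ffun_upd kn i0 i (fun g => w n.+1 g * Phi g)).
apply: eq_bigr => g /eqP gk.
by rewrite w_step ffunE eqxx ffun_upd_upd -gk ffun_upd_id mulrA.
Qed.

Lemma multilinear_expand :
  L (fun k => \sum_i a k i *: d i) =
  \sum_(g : {ffun 'I_p -> I}) (\prod_k a k (g k)) * L (fun k => d (g k)).
Proof.
have [i0 _|I0] := pickP (@predT I).
  rewrite (_ : (fun k => _) =
       fun k : 'I_p => if (k < p)%N then \sum_i a k i *: d i else 0); last first.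
    by apply: funext => k; rewrite ltn_ord.
  rewrite (multilinear_expand_prefix i0 (leqnn p)).
  apply: eq_bigr => g _; congr (_ * L _).
    by apply: eq_bigr => k _; rewrite ltn_ord.
  by apply: funext => k; rewrite ltn_ord.
have [k _|P0] := pickP (@predT 'I_p).
  rewrite big_pred0 => [|g]; last by have := I0 (g k).
  rewrite -(multilinear_tupd0 (fun _ => 0) k); congr L; apply: funext => j.
  by rewrite /tupd big_pred0 //; case: eqP.
have fun_eq (u v : 'I_p -> E) : u = v by apply: funext => k; have := P0 k.
rewrite (eq_bigr (fun _ => L (fun k => \sum_i a k i *: d i))) => [|g _].
  by rewrite sumr_const card_ffun (eq_card0 P0) expn0.
by rewrite big_pred0 // mul1r (fun_eq (fun k => d (g k))
                                     (fun k => \sum_i a k i *: d i)).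
Qed.

End Multilinear.

Definition stabilizes (T : finType) (U : eqType) (s : {perm T}) (g : T -> U) :=
  [forall k, g (s k) == g k].

Lemma sum_sign_stabilizes (R : numDomainType) (T : finType) (U : eqType)
    (g : T -> U) :
  \sum_(s : {perm T}) (-1) ^+ odd_perm s * (stabilizes s g)%:R =
  (injectiveb g)%:R :> R.
Proof.
have [/injectiveP g_inj | /injectivePn [k [l kl gkl]]] := boolP (injectiveb g).
  rewrite (bigD1 1%g) //= odd_perm1 mul1r big1 ?addr0.
    by rewrite (_ : stabilizes 1 g) //; apply/forallP => k; rewrite perm1.
  move=> s s1; have [/forallP gs|] := boolP (stabilizes s g); last by rewrite mulr0.
  by case/eqP: s1; apply/permP => k; rewrite perm1; apply: g_inj; apply/eqP.
pose tau := tperm k l.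
have g_tau j : g (tau j) = g j by rewrite /tau; case: tpermP => [->|->|].
have stab_tau s : stabilizes (tau * s) g = stabilizes s g.
  apply/forallP/forallP => gs j.
    by have := gs (tau j); rewrite permM tpermK g_tau.
  by rewrite permM (eqP (gs (tau j))) g_tau.
apply: (sum_eq0_involution (h := fun s => tau * s)%g) => s.
  by rewrite mulgA tperm2 mul1g.
by rewrite odd_permM odd_tperm kl /= signrN mulNr stab_tau.
Qed.

Definition sign {R : nzRingType} (b : bool) : R := if b then 1 else -1.

Lemma signN {R : nzRingType} b : sign (~~ b) = - sign b :> R.
Proof. by case: b; rewrite /sign ?opprK. Qed.

Lemma sign_eqb {R : nzRingType} x y : sign (x == y) = sign x * sign y :> R.
Proof. by case: x; case: y; rewrite /sign ?mulr1 ?mul1r ?mulrNN ?mulr1. Qed.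

Section Signs.
Variables (R : numDomainType) (T I : finType).
Local Notation signs := {ffun T -> {ffun I -> bool}}.

(* Every entry of e occurs an even number of times in the product iff
   g o s = g; otherwise flipping one entry negates the product. *)
Lemma sum_prod_sign_stabilizes (s : {perm T}) (g : T -> I) :
  \sum_(e : signs) \prod_k sign (e k (g k) == e (s k) (g k)) =
  (stabilizes s g)%:R * #|signs|%:R :> R.
Proof.
under eq_bigr do rewrite (eq_bigr _ (fun k _ => sign_eqb _ _)) big_split /=.
have [/forallP gs | /forallPn [k0 /eqP gk0]] := boolP (stabilizes s g).
  rewrite mul1r -sum1_card natr_sum; apply: eq_bigr => e _.
  rewrite [X in _ * X](reindex_inj (@perm_inj _ s^-1%g)) /=.
  rewrite -big_split; apply: big1 => k _ /=.
  rewrite permKV -(eqP (gs (s^-1%g k))) permKV.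
  by rewrite /sign; case: (e k (g k)); rewrite ?mulr1 ?mulrNN ?mulr1.
pose j := s k0; pose i := g k0.
pose flip (e : signs) := ffun_upd e j (ffun_upd (e j) i (~~ e j i)).
rewrite mul0r; apply: (sum_eq0_involution (h := flip)) => e.
  by rewrite /flip ffunE eqxx ffun_upd_upd ffunE eqxx negbK ffun_upd_upd
    !ffun_upd_id.
have flip_diag : \prod_k sign (flip e k (g k)) = \prod_k sign (e k (g k)) :> R.
  apply: eq_bigr => k _; rewrite /flip ffunE; case: eqP => [->|//].
  by rewrite ffunE; case: eqP => [/gk0 []|].
have flip_perm :
    \prod_k sign (flip e (s k) (g k)) = - \prod_k sign (e (s k) (g k)) :> R.
  rewrite (bigD1 k0) //= [in RHS](bigD1 k0) //= -mulNr /flip !ffun_updE eqxx.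
  rewrite ffunE eqxx signN.
  congr (_ * _); apply: eq_bigr => k kk0; rewrite ffun_updE.
  by rewrite (inj_eq (@perm_inj _ s)) (negbTE kk0).
by rewrite flip_diag flip_perm mulrN.
Qed.

Lemma sum_ffun_coord (U : finType) (k : T) (G : U -> R) :
  \sum_(e : {ffun T -> U}) G (e k) = (\sum_c G c) * #|U|%:R ^+ #|T|.-1.
Proof.
rewrite (eq_bigr (fun e : {ffun T -> U} =>
           \prod_j (if j == k then G (e j) else 1))); last first.
  by move=> e _; rewrite (bigD1 k) //= eqxx big1 ?mulr1 // => j /negbTE ->.
rewrite -(bigA_distr_bigA (fun j c => if j == k then G c else 1)) /=.
rewrite (bigD1 k) //= eqxx; congr (_ * _).
rewrite (eq_bigr (fun _ => #|U|%:R)) ?prodr_const ?cardC1 // => j /negbTE ->.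
by rewrite sumr_const.
Qed.

Lemma sum_ffun_xnor (k l : T) (G : {ffun I -> bool} -> R) : k != l ->
  \sum_(e : signs) G [ffun i => e k i == e l i] = \sum_(e : signs) G (e k).
Proof.
move=> kl; have lk : l != k by rewrite eq_sym.
pose psi (e : signs) := ffun_upd e k [ffun i => e k i == e l i].
have psiK : involutive psi.
  move=> e; rewrite /psi ffun_upd_upd; apply/ffunP => j; rewrite !ffunE.
  case: eqP => [->|//]; apply/ffunP => i; rewrite !ffunE eqxx (negbTE lk) ffunE.
  by case: (e k i); case: (e l i).
rewrite [RHS](reindex_inj (inv_inj psiK)); apply: eq_bigr => e _.
by rewrite /psi ffunE eqxx.
Qed.

End Signs.

Lemma sum_norm_xnor_signs (R : realType) (E : normedModType R) (T I : finType)
    (d : I -> E) (k l : T) n : k != l ->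
  \sum_(e : {ffun T -> {ffun I -> bool}})
     `|\sum_i sign (e k i == e l i) *: d i| ^+ n =
  #|{ffun T -> {ffun I -> bool}}|%:R * rademacher_moment d n.
Proof.
move=> kl; pose G (c : {ffun I -> bool}) := `|\sum_i sign (c i) *: d i| ^+ n.
transitivity (\sum_(e : {ffun T -> {ffun I -> bool}}) G [ffun i => e k i == e l i]).
  by apply: eq_bigr => e _; rewrite /G; under [in RHS]eq_bigr do rewrite ffunE.
rewrite sum_ffun_xnor // sum_ffun_coord /rademacher_moment !card_ffun card_bool.
have T_gt0 : (0 < #|T|)%N by apply/card_gt0P; exists k.
rewrite !natrX -[in RHS](prednK T_gt0) exprS.
have two_neq0 : 2 ^+ #|I| != 0 :> R by rewrite expf_neq0 // pnatr_eq0.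
by rewrite /G; field.
Qed.

Lemma prod_le_mean_pow (R : realFieldType) (T : finType) (y : T -> R) :
  (0 < #|T|)%N -> (forall k, 0 <= y k) ->
  \prod_k y k <= (\sum_k y k ^+ #|T|) / #|T|%:R.
Proof.
move=> T_gt0 y_ge0.
rewrite -(ler_pXn2r T_gt0) ?nnegrE ?prodr_ge0 ?divr_ge0 ?sumr_ge0 ?ler0n //;
  last by move=> k _; rewrite exprn_ge0.
rewrite -prodrXl.
have := leif_AGM (A := [pred k : T | true]) (E := fun k => y k ^+ #|T|)
  (fun k _ => exprn_ge0 _ (y_ge0 k)).
have cardT : #|[pred k : T | true]| = #|T| by apply: eq_card.
by rewrite /= cardT => /leif_le AGM; exact: AGM.
Qed.

(* Pad the product with the constant S on the coordinates outside A and apply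
   AM-GM with exponent #|T|, the order of the known moments. *)
Lemma sum_prod_le_moment (R : realFieldType) (W T : finType) (A : {set T})
    (X : T -> W -> R) (S : R) :
  0 <= S -> (forall k w, 0 <= X k w) ->
  {in A, forall k, \sum_w X k w ^+ #|T| = #|W|%:R * S ^+ #|T|} ->
  \sum_w \prod_(k in A) X k w <= #|W|%:R * S ^+ #|A|.
Proof.
move=> S_ge0 X_ge0 XS.
have [k kA|A0] := pickP [in A]; last first.
  rewrite (eq_card0 A0) mulr1 (eq_bigr (fun _ => 1)) ?sumr_const // => w _.
  exact: big_pred0.
have T_gt0 : (0 < #|T|)%N by apply/card_gt0P; exists k.
have [S0|S_gt0] := eqVneq S 0.
  have Xk0 w : X k w = 0.
    have := XS k kA; rewrite S0 expr0n gtn_eqF //= mulr0 => sum0.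
    have := psumr_eq0P (fun w _ => exprn_ge0 #|T| (X_ge0 k w)) sum0 (i := w) isT.
    by move/eqP; rewrite expf_eq0 T_gt0 => /eqP.
  rewrite (eq_bigr (fun _ => 0)) ?sumr_const ?mul0rn ?mulr_ge0 ?exprn_ge0 //.
  by move=> w _; rewrite (bigD1 k) //= Xk0 mul0r.
have S_pos : 0 < S by rewrite lt0r S_gt0.
pose y w j := if j \in A then X j w else S.
have y_ge0 w j : 0 <= y w j by rewrite /y; case: ifP.
have prod_y w : \prod_k y w k = S ^+ #|~: A| * \prod_(k in A) X k w.
  rewrite (bigID (mem A)) /= mulrC; congr (_ * _).
    rewrite -prodr_const; apply: eq_big => [j|j /negbTE jA]; first by rewrite inE.
    by rewrite /y jA.
  by apply: eq_bigr => j jA; rewrite /y jA.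
have sum_y : \sum_w \sum_k y w k ^+ #|T| = #|T|%:R * (#|W|%:R * S ^+ #|T|).
  rewrite exchange_big /= (eq_bigr (fun _ => #|W|%:R * S ^+ #|T|)) => [|j _].
    by rewrite sumr_const [RHS]mulr_natl.
  have [jA|jA] := boolP (j \in A).
    by rewrite -(XS j jA); apply: eq_bigr => w _; rewrite /y jA.
  rewrite (eq_bigr (fun _ => S ^+ #|T|)) => [|w _]; last by rewrite /y (negbTE jA).
  by rewrite sumr_const [RHS]mulr_natl.
have AGM w :
    S ^+ #|~: A| * \prod_(k in A) X k w <= (\sum_k y w k ^+ #|T|) / #|T|%:R.
  by rewrite -prod_y; exact: prod_le_mean_pow.
rewrite -(ler_pM2l (exprn_gt0 #|~: A| S_pos)) big_distrr /=.
apply: le_trans (ler_sum _ (fun w _ => AGM w)) _.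
rewrite -big_distrl /= sum_y mulrC mulKf ?pnatr_eq0 -?lt0n //.
by rewrite mulrCA -exprD addnC cardsC.
Qed.

Section PermFixpoints.
Variable T : finType.

Definition fixpoints (s : {perm T}) := [set k | s k == k].

Lemma card_fixpoints_lt (s : {perm T}) :
  s != 1%g -> (#|fixpoints s| < #|T|.-1)%N.
Proof.
move=> s1; have [k sk] : exists k, s k != k.
  apply/existsP; apply: contraR s1 => /existsPn s_id.
  by apply/eqP/permP => k; rewrite perm1; apply/eqP; have := s_id k; rewrite negbK.
have moved : [set k; s k] \subset ~: fixpoints s.
  apply/fintype.subsetP => x; rewrite !inE => /orP[] /eqP ->; first by [].
  by rewrite (inj_eq (@perm_inj _ s)).
have := subset_leq_card moved; rewrite cards2 eq_sym sk.
have := cardsC (fixpoints s); move: #|fixpoints s| #|~: fixpoints s| => a b.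
lia.
Qed.

Lemma card_perm_fixpoints j :
  (#|[set s : {perm T} | #|fixpoints s| == j]| <= 'C(#|T|, j) * (#|T| - j)`!)%N.
Proof.
rewrite -sum1dep_card.
apply: (@leq_trans (\sum_(s : {perm T}) \sum_(A : {set T} | #|A| == j)
                      (perm_on (~: A) s : nat))).
  rewrite big_mkcond /=; apply: leq_sum => s _; case: eqP => // fix_j.
  rewrite (bigD1 (fixpoints s)) /=; last by rewrite fix_j.
  suff -> : perm_on (~: fixpoints s) s by apply: leq_addr.
  by apply/fintype.subsetP => x; rewrite !inE.
rewrite exchange_big /= (eq_bigr (fun _ => (#|T| - j)`!)).
  by rewrite sum_nat_cond_const card_draws.
move=> A /eqP A_j; rewrite -big_mkcond /= sum1_card card_perm.
by have := cardsC A; rewrite A_j => <-; rewrite addKn.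
Qed.

Lemma sum_perm_fixpoints_le (R : realDomainType) (h : nat -> R) :
  (forall j, 0 <= h j) ->
  \sum_(s : {perm T} | s != 1%g) h #|fixpoints s| <=
  \sum_(j < #|T|.-1) 'C(#|T|, j)%:R * (#|T| - j)`!%:R * h j.
Proof.
move=> h_ge0.
rewrite (eq_bigr (fun s => \sum_(j < #|T|.-1) (#|fixpoints s| == j)%:R * h j));
  last first.
  move=> s s1; rewrite (bigD1 (Ordinal (card_fixpoints_lt s1))) //= eqxx mul1r.
  rewrite big1 ?addr0 // => j /negbTE j_neq.
  by rewrite (_ : (_ == _) = false) ?mul0r //; apply: contraFF j_neq => /eqP fj;
    apply/eqP/val_inj.
rewrite exchange_big /=; apply: ler_sum => j _.
rewrite -big_distrl /= -natrM ler_wpM2r // -natr_sum ler_nat.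
apply: leq_trans (card_perm_fixpoints j).
rewrite -sum1dep_card big_mkcond [X in (_ <= X)%N]big_mkcond /=.
by apply: leq_sum => s _; case: (s != 1%g); case: (_ == _).
Qed.

End PermFixpoints.

Lemma powR_invnK (R : realType) (x : R) n :
  0 <= x -> (0 < n)%N -> (x `^ n%:R^-1) ^+ n = x.
Proof.
move=> x_ge0 n_gt0; have n_neq0 : n%:R != 0 :> R by rewrite pnatr_eq0 -lt0n.
by rewrite -powR_mulrn ?powR_ge0 // -powRrM mulVf // powRr1.
Qed.

Lemma rademacher_moment_ge0 (R : realType) (E : normedModType R) (I : finType)
    (d : I -> E) n :
  0 <= rademacher_moment d n.
Proof.
rewrite mulr_ge0 ?invr_ge0 ?exprn_ge0 ?ler0n //.
by apply: sumr_ge0 => eps _; rewrite exprn_ge0.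
Qed.

Lemma tcost_ge0 (R : realType) (E : normedModType R) p (t : @tensor R E p) :
  0 <= tcost t.
Proof. by apply: sumr_ge0 => c _; rewrite mulr_ge0 // prodr_ge0. Qed.

Lemma projnorm_le_tcost (R : realType) (E : normedModType R) p
    (t v : @tensor R E p) :
  tequiv t v -> projnorm t <= tcost v.
Proof.
move=> tv; apply: ge_inf; last by exists v.
by exists 0 => _ [w _ <-]; exact: tcost_ge0.
Qed.

Section RademacherRepresentation.
Variables (R : realType) (E : normedModType R) (I : finType) (d : I -> E) (p : nat).
Local Notation signs := {ffun 'I_p -> {ffun I -> bool}}.
Let f := \sum_i d i.
Let S := powR (rademacher_moment d p) p%:R^-1.
Let N : R := #|signs|%:R.

Definition paired_sum (s : {perm 'I_p}) (e : signs) (k : 'I_p) : E :=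
  \sum_i sign (e k i == e (s k) i) *: d i.

Definition noninjective_part : @tensor R E p :=
  tsub (tpure (fun _ => f))
    [seq (1, fun j => d (g j)) | g : {ffun 'I_p -> I} <-
       enum [pred g : {ffun 'I_p -> I} | injectiveb g]].

Definition rademacher_rep : @tensor R E p :=
  [seq (- (-1) ^+ odd_perm s / N, paired_sum s e)
  | s <- [seq s <- index_enum {perm 'I_p} | s != 1%g], e <- index_enum signs].

Lemma card_signs_gt0 : 0 < N.
Proof. by rewrite ltr0n card_ffun expn_gt0 card_ffun card_bool expn_gt0. Qed.

Lemma paired_sum_fixed (s : {perm 'I_p}) (e : signs) (k : 'I_p) :
  s k = k -> paired_sum s e k = f.
Proof. by move=> sk; apply: eq_bigr => i _; rewrite sk eqxx scale1r. Qed.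

Section Evaluation.
Variable L : ('I_p -> E) -> R.
Hypothesis L_multilinear : multilinear L.

Lemma teval_noninjective_part :
  teval L noninjective_part =
  \sum_(g : {ffun 'I_p -> I}) (~~ injectiveb g)%:R * L (fun k => d (g k)).
Proof.
rewrite /teval /tsub /tpure big_cons !big_map big_enum /= mul1r.
have -> : L (fun _ => f) = \sum_(g : {ffun 'I_p -> I}) L (fun k => d (g k)).
  transitivity (L (fun _ => \sum_i (1 : R) *: d i)).
    by congr L; apply: funext => _; apply: eq_bigr => i _; rewrite scale1r.
  rewrite (multilinear_expand L_multilinear); apply: eq_bigr => g _.
  by rewrite big1 ?mul1r.
rewrite [X in _ + X]big_mkcond -big_split; apply: eq_bigr => g _ /=.
by rewrite inE; case: (injectiveb g); rewrite /= ?mulN1r ?subrr ?mul0r ?addr0 ?mul1r.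
Qed.

Lemma teval_rademacher_rep :
  teval L rademacher_rep =
  \sum_(g : {ffun 'I_p -> I}) (~~ injectiveb g)%:R * L (fun k => d (g k)).
Proof.
rewrite /teval big_allpairs_dep big_filter /=.
transitivity (\sum_(s : {perm 'I_p} | s != 1%g) \sum_(g : {ffun 'I_p -> I})
    - ((-1) ^+ odd_perm s * (stabilizes s g)%:R) * L (fun k => d (g k))).
  apply: eq_bigr => s _.
  have expand e : L (paired_sum s e) = \sum_(g : {ffun 'I_p -> I})
      (\prod_k sign (e k (g k) == e (s k) (g k))) * L (fun k => d (g k)).
    exact: (multilinear_expand L_multilinear d
              (fun k i => sign (e k i == e (s k) i))).
  under eq_bigr => e _ do rewrite expand big_distrr /=.
  rewrite exchange_big /=; apply: eq_bigr => g _.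
  under eq_bigr do rewrite mulrCA.
  rewrite -big_distrl /= sum_prod_sign_stabilizes -/N.
  have N_neq0 : N != 0 by rewrite gt_eqF ?card_signs_gt0.
  by move: ((-1) ^+ _) (stabilizes s g)%:R (L _) => sgn st Lg; field.
rewrite exchange_big /=; apply: eq_bigr => g _.
rewrite -big_distrl /= sumrN; congr (_ * _).
have := sum_sign_stabilizes R g; rewrite (bigD1 1%g) //= odd_perm1 mul1r.
rewrite (_ : stabilizes 1 g); last by apply/forallP => k; rewrite perm1.
move: (\sum_(s | _) _) => rest.
by case: (injectiveb g); rewrite /= ?mulr1n ?mulr0n; lra.
Qed.

End Evaluation.

Lemma tequiv_noninjective_rademacher_rep : tequiv noninjective_part rademacher_rep.
Proof.
by move=> L L_ml; rewrite teval_noninjective_part // teval_rademacher_rep.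
Qed.

Hypothesis p_gt0 : (0 < p)%N.

Lemma mean_prod_norm_paired_sum_le (s : {perm 'I_p}) :
  N^-1 * \sum_(e : signs) \prod_k `|paired_sum s e k| <=
  `|f| ^+ #|fixpoints s| * S ^+ (p - #|fixpoints s|).
Proof.
set F := fixpoints s.
have moment k : k \in ~: F ->
    \sum_(e : signs) `|paired_sum s e k| ^+ #|'I_p| = N * S ^+ #|'I_p|.
  rewrite !inE card_ord powR_invnK ?rademacher_moment_ge0 // => sk.
  by apply: sum_norm_xnor_signs; rewrite eq_sym.
have := sum_prod_le_moment (powR_ge0 _ _)
          (fun k e => normr_ge0 (paired_sum s e k)) moment.
have -> : #|~: F| = (p - #|F|)%N by rewrite cardsCs finset.setCK card_ord.
move=> bound.
have split e : \prod_k `|paired_sum s e k| =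
               `|f| ^+ #|F| * \prod_(k in ~: F) `|paired_sum s e k|.
  rewrite (bigID (mem F)) /= -prodr_const; congr (_ * _).
    by apply: eq_bigr => k; rewrite inE => /eqP /(paired_sum_fixed e) ->.
  by apply: eq_bigl => k; rewrite !inE.
under eq_bigr do rewrite split.
rewrite -big_distrr /= mulrCA ler_wpM2l ?exprn_ge0 //.
by rewrite ler_pdivrMl ?card_signs_gt0.
Qed.

Lemma tcost_rademacher_rep_le :
  tcost rademacher_rep <=
  \sum_(j < p.-1) ('C(p, j)%:R * (p - j)`!%:R * `|f| ^+ j * S ^+ (p - j)).
Proof.
rewrite /tcost big_allpairs_dep big_filter /=.
apply: le_trans (_ : \sum_(s : {perm 'I_p} | s != 1%g)
    `|f| ^+ #|fixpoints s| * S ^+ (p - #|fixpoints s|) <= _).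
  apply: ler_sum => s _; apply: le_trans (mean_prod_norm_paired_sum_le s).
  rewrite big_distrr /=; apply: ler_sum => e _.
  by rewrite normrM normrN normr_sign mul1r normfV ger0_norm ?lexx //
    ltW ?card_signs_gt0.
apply: le_trans (@sum_perm_fixpoints_le 'I_p R
                   (fun j => `|f| ^+ j * S ^+ (p - j)) _) _.
  by move=> j; rewrite mulr_ge0 ?exprn_ge0 ?powR_ge0.
by rewrite card_ord; apply: ler_sum => j _; rewrite mulrA.
Qed.

End RademacherRepresentation.

Theorem corollary5p2 (R : realType) (E : completeNormedModType R)
  (I : finType) (d : I -> E) (p : nat) (hp : (2 <= p)%N) :
  let f := \sum_(i : I) d i in
  let S := powR (rademacher_moment d p) (p%:R^-1) in
  projnorm (tsub (tpure (fun _ : 'I_p => f))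
                 [seq (1, (fun j : 'I_p => d (g j))) | g : {ffun 'I_p -> I} <- enum [pred g : {ffun 'I_p -> I} | injectiveb g]])
  <= \sum_(s < p.-1) ('C(p, s)%:R * (p - s)`!%:R * `|f| ^+ s * S ^+ (p - s)).
Proof.
cbv zeta.
apply: le_trans (projnorm_le_tcost (v := rademacher_rep d p) _)
                (tcost_rademacher_rep_le d (ltnW hp)).
exact: tequiv_noninjective_rademacher_rep.
Qed.
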